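(* Consider the $T$-round online first-price auction problem and the combined policy described in the context. For a sequence $(v_t,m_t)_{t=1}^T$, let $V_T\coloneqq\sum_{t=2}^T|m_t-m_{t-1}|$ and $L_T\coloneqq\sum_{t=2}^T\mathbbm{1}(m_t\ne m_{t-1})$, and assume $V_T=\Omega(\ln T)$. Then the combined policy achieves expected dynamic regret $\tilde{O}(\min\{\sqrt{TV_T},L_T\})$.
   Context: Online first-price auction over $T$ rounds: at each round $t$ the learner observes a private value $v_t\in[0,1]$, submits a bid $b_t\in[0,1]$ (possibly randomized, depending only on past $(v_s,m_s)_{s<t}$ and $v_t$), then observes $m_t\in[0,1]$, the highest bid of the other bidders, and receives reward $r(b_t;v_t,m_t)$ with $r(b;v,m)\coloneqq(v-b)\mathbbm{1}(b\ge m)$. The expected dynamic regret is $\mathbb{E}[\mathrm{DR}_T(\pi)]\coloneqq\sum_{t=1}^T\max\{v_t-m_t,0\}-\sum_{t=1}^T\mathbb{E}[r(b_t;v_t,m_t)]$. $\tilde{O}(\cdot)$ hides polylogarithmic factors in $T$. Base policy $\mathcal{A}$ (AR-Prod): experts $i\in\{1,\dots,N\}$, $N=1/\epsilon$, $\epsilon=1/T$, expert $i$ bids $\min\{v_t,i\epsilon\}$ with reward $r_{t,i}=r(\min\{v_t,i\epsilon\};v_t,m_t)$; time is split into batches, at the start of each batch weights reset to uniform; bid $\min\{v_t,i\epsilon\}$ is chosen w.p. $p_{t,i}$, then $p_{t+1,i}\propto(1+\eta(r_{t,i}-\mu_t))p_{t,i}$ with $\eta=1/2$, $\mu_t=\max\{v_t-m_t,0\}$;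 batch $j$ continues while its current length $\Delta_{T,j}<\sqrt{T/(\sum_{i=1}^jV_{T,i}+1/T)}$, where $V_{T,i}$ is the variation $\sum|m_t-m_{t-1}|$ over consecutive rounds within batch $i$ (so far, for the current batch). Base policy $\mathcal{B}$ (AR-OMD): same experts (with suitably chosen precision $\epsilon$ and learning rate $\eta$); a new batch begins at round $t+1$ whenever at a non-first round $t$ of the batch $m_t\ne m_{t-1}$; in round $t$ of a batch starting at $t_0$, bid $\min\{v_t,i\epsilon\}$ w.p. $p_{t,i}\propto\exp(\eta(\sum_{s=t_0}^{t-1}r_{s,i}+r(\min\{v_t,i\epsilon\};v_t,m_{t-1})))$. Combined policy: with $\eta'=\frac12\sqrt{\ln T/T}$, $w_1^{\mathcal{A}}=\eta'$, $w^{\mathcal{B}}=1-\eta'$ (fixed); at each round both base policies produce bids $b_t^{\mathcal{A}},b_t^{\mathcal{B}}$; the learner bids $b_t^{\mathcal{A}}$ with probability $p_t=w_t^{\mathcal{A}}/(w_t^{\mathcal{A}}+w^{\mathcal{B}})$ and $b_t^{\mathcal{B}}$ otherwise; after observing $m_t$ (which is passed to both base policies), set $\delta_t=r(b_t^{\mathcal{A}};v_t,m_t)-r(b_t^{\mathcal{B}};v_t,m_t)$ and $w_{t+1}^{\mathcal{A}}=w_t^{\mathcal{A}}(1+\eta'\delta_t)$. *)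

From Stdlib Require Import Reals List.
Open Scope R_scope.

(* Rounds are indexed t = 1..T; a sequence is a pair of functions v m : nat -> R
   (values at t = 0 or t > T are irrelevant). *)

Definition lsum (l : list nat) (f : nat -> R) : R :=
  fold_right (fun i acc => f i + acc) 0 l.

Definition rew (b v m : R) : R := if Rle_dec m b then v - b else 0.

Definition mu (v m : R) : R := Rmax (v - m) 0.

Definition experts (N : nat) : list nat := List.seq 1 N.
Definition bid (N i : nat) (v : R) : R := Rmin v (INR i / INR N).

Record stA := mkA {
  wA : nat -> R;      (* (unnormalised) weights of the experts *)
  lenA : nat;         (* number of rounds played so far in the current batch *)
  VprevA : R;         (* sum of the variations of the completed batches *)
  VcurA : R           (* variation of the current batch so far *)
}.

Definition initA : stA := mkA (fun _ => 1) 0 0 0.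

Definition probA (N : nat) (s : stA) (i : nat) : R :=
  wA s i / lsum (experts N) (wA s).

Definition stepA (T : nat) (s : stA) (vt mt mprev : R) : stA :=
  let Vc := if Nat.eqb (lenA s) 0 then VcurA s else VcurA s + Rabs (mt - mprev) in
  let len := S (lenA s) in
  let w' := fun i => (1 + / 2 * (rew (bid T i vt) vt mt - mu vt mt)) * probA T s i in
  if Rlt_dec (INR len) (sqrt (INR T / (VprevA s + Vc + / INR T)))
  then mkA w' len (VprevA s) Vc
  else mkA (fun _ => 1) 0 (VprevA s + Vc) 0.

(* state of A at the start of round t (t >= 1) *)
Fixpoint stateA (T : nat) (v m : nat -> R) (t : nat) : stA :=
  match t with
  | S (S k as t') => stepA T (stateA T v m t') (v t') (m t') (m k)
  | _ => initA
  end.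

Definition pA (T : nat) (v m : nat -> R) (t i : nat) : R :=
  probA T (stateA T v m t) i.

(* first round of the batch containing round t *)
Fixpoint startB (m : nat -> R) (t : nat) : nat :=
  match t with
  | S (S k as t') =>
      let s := startB m t' in
      if andb (Nat.ltb s t') (if Req_EM_T (m t') (m k) then false else true)
      then t else s
  | _ => 1%nat
  end.

(* m_{t-1}, with the convention m_0 := 0 *)
Definition prevm (m : nat -> R) (t : nat) : R :=
  match t with S (S k) => m (S k) | _ => 0 end.

Definition scoreB (NB : nat) (etaB : R) (v m : nat -> R) (t i : nat) : R :=
  let t0 := startB m t in
  exp (etaB * (lsum (List.seq t0 (t - t0)) (fun s => rew (bid NB i (v s)) (v s) (m s))
               + rew (bid NB i (v t)) (v t) (prevm m t))).

Definition pB (NB : nat) (etaB : R) (v m : nat -> R) (t i : nat) : R :=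
  scoreB NB etaB v m t i / lsum (experts NB) (scoreB NB etaB v m t).

Definition etaP (T : nat) : R := / 2 * sqrt (ln (INR T) / INR T).

(* expected total reward collected in rounds t, ..., t + fuel - 1 when the
   current weight of A is w (the weight of B is fixed to 1 - eta').
   The base policies' bids are drawn independently with probabilities pA, pB,
   and the learner plays A's bid w.p. w/(w + 1 - eta'). *)
Fixpoint expRewFrom (T NB : nat) (etaB : R) (v m : nat -> R) (fuel t : nat) (w : R) : R :=
  match fuel with
  | O => 0
  | S f =>
      let pt := w / (w + (1 - etaP T)) in
      lsum (experts T) (fun i => lsum (experts NB) (fun j =>
        let ra := rew (bid T i (v t)) (v t) (m t) in
        let rb := rew (bid NB j (v t)) (v t) (m t) in
        pA T v m t i * pB NB etaB v m t j *
          (pt * ra + (1 - pt) * rb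
           + expRewFrom T NB etaB v m f (S t) (w * (1 + etaP T * (ra - rb))))))
  end.

Definition expReward (T NB : nat) (etaB : R) (v m : nat -> R) : R :=
  expRewFrom T NB etaB v m T 1 (etaP T).

Definition DR (T NB : nat) (etaB : R) (v m : nat -> R) : R :=
  lsum (List.seq 1 T) (fun t => Rmax (v t - m t) 0) - expReward T NB etaB v m.

Definition VT (T : nat) (m : nat -> R) : R :=
  lsum (List.seq 2 (T - 1)) (fun t => Rabs (m t - m (t - 1)%nat)).
Definition LT (T : nat) (m : nat -> R) : R :=
  lsum (List.seq 2 (T - 1))
    (fun t => if Req_EM_T (m t) (m (t - 1)%nat) then 0 else 1).

From Stdlib Require Import Reals List Lra Lia Wf_nat Classical.
From Coquelicot Require Import Rcomplements.
Open Scope R_scope.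

(* The combined policy mixes A and B by Prod with learning rate [eta ~ sqrt (ln T / T)];
   two potential arguments show that its expected reward is at least that of A minus
   [O (sqrt (T ln T))] and at least that of B minus [O (1)].
   B restarts whenever [m] changes; in a round where [m] did not change, [m] is constant
   on the whole batch, so the grid expert just above it leads throughout and the
   (almost greedy) exponential weights lose only [O (1/T)]: B's regret is [L_T + O (1)].
   A runs Prod on batches that end once their length reaches [sqrt (T / V)], where [V]
   is the variation observed so far.  In a batch of length [L] and variation [V_j] the grid
   expert just above [max m] loses at most [2 V_j + 1/T] per round, so the batch costs
   [O (ln T + L V_j)]; the terms [L V_j] telescope to [O (sqrt (T V_T))], and there are
   at most [sqrt (T V_T + 1)] completed batches.  Finally [V_T >= c ln T] absorbs
   [sqrt (T ln T)] into [sqrt (T V_T)], and [V_T <= L_T]. *)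

(** * Finite sums *)

Lemma lsum_cons a l f : lsum (a :: l) f = f a + lsum l f.
Proof. reflexivity. Qed.

Lemma lsum_app l1 l2 f : lsum (l1 ++ l2) f = lsum l1 f + lsum l2 f.
Proof.
  induction l1 as [|a l1 IH]; [simpl; lra|].
  rewrite <- app_comm_cons, !lsum_cons, IH; lra.
Qed.

Lemma lsum_ext l f g : (forall x, In x l -> f x = g x) -> lsum l f = lsum l g.
Proof.
  induction l as [|a l IH]; intros Hfg; [reflexivity|]. rewrite !lsum_cons.
  rewrite Hfg, IH; simpl; auto; intros; apply Hfg; simpl; auto.
Qed.

Lemma lsum_le l f g : (forall x, In x l -> f x <= g x) -> lsum l f <= lsum l g.
Proof.
  induction l as [|a l IH]; intros Hfg; [simpl; lra|]. rewrite !lsum_cons.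
  apply Rplus_le_compat; [apply Hfg; simpl; auto|].
  apply IH; intros; apply Hfg; simpl; auto.
Qed.

Lemma lsum_plus l f g : lsum l (fun x => f x + g x) = lsum l f + lsum l g.
Proof. induction l as [|a l IH]; [simpl; lra|]. rewrite !lsum_cons, IH; lra. Qed.

Lemma lsum_minus l f g : lsum l (fun x => f x - g x) = lsum l f - lsum l g.
Proof. induction l as [|a l IH]; [simpl; lra|]. rewrite !lsum_cons, IH; lra. Qed.

Lemma lsum_scal l k f : lsum l (fun x => k * f x) = k * lsum l f.
Proof. induction l as [|a l IH]; [simpl; lra|]. rewrite !lsum_cons, IH; lra. Qed.

Lemma lsum_scalr l k f : lsum l (fun x => f x * k) = lsum l f * k.
Proof. induction l as [|a l IH]; [simpl; lra|]. rewrite !lsum_cons, IH; lra. Qed.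

Lemma lsum_const l k : lsum l (fun _ => k) = INR (length l) * k.
Proof.
  induction l as [|a l IH]; simpl length; [simpl; lra|].
  rewrite S_INR, lsum_cons, IH; lra.
Qed.

Lemma lsum_nonneg l f : (forall x, In x l -> 0 <= f x) -> 0 <= lsum l f.
Proof.
  intros Hf. replace 0 with (lsum l (fun _ => 0)) by (rewrite lsum_const; lra).
  apply lsum_le; auto.
Qed.

Lemma lsum_pos l f : (forall x, In x l -> 0 < f x) -> l <> nil -> 0 < lsum l f.
Proof.
  intros Hf Hl. destruct l as [|a l]; [congruence|]. rewrite lsum_cons.
  assert (0 < f a) by (apply Hf; simpl; auto).
  assert (0 <= lsum l f) by (apply lsum_nonneg; intros; left; apply Hf; simpl; auto).
  lra.
Qed.

Lemma lsum_ge_term l f a :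
  In a l -> (forall x, In x l -> 0 <= f x) -> f a <= lsum l f.
Proof.
  induction l as [|b l IH]; intros Ha Hf; [destruct Ha|]. rewrite lsum_cons.
  assert (0 <= f b) by (apply Hf; simpl; auto).
  assert (0 <= lsum l f) by (apply lsum_nonneg; intros; apply Hf; simpl; auto).
  destruct Ha as [<-|Ha]; [lra|].
  assert (f a <= lsum l f) by (apply IH; auto; intros; apply Hf; simpl; auto).
  lra.
Qed.

Lemma lsum_0_or_ge1 l f :
  (forall x, In x l -> f x = 0 \/ f x = 1) -> lsum l f = 0 \/ 1 <= lsum l f.
Proof.
  induction l as [|a l IH]; intros Hf; [left; reflexivity|]. rewrite lsum_cons.
  assert (0 <= lsum l f)
    by (apply lsum_nonneg; intros x Hx; destruct (Hf x (or_intror Hx)); lra).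
  destruct (Hf a (or_introl eq_refl)) as [-> | ->]; [|right; lra].
  destruct IH as [-> | ?]; [intros; apply Hf; simpl; auto | left | right]; lra.
Qed.

Lemma length_experts N : length (experts N) = N.
Proof. apply length_seq. Qed.

Lemma in_experts N i : In i (experts N) <-> (1 <= i <= N)%nat.
Proof. unfold experts. rewrite in_seq. lia. Qed.

Lemma experts_nonnil N : (1 <= N)%nat -> experts N <> nil.
Proof. intros HN. destruct N; [lia|]. discriminate. Qed.

Lemma lsum_experts_1 N : lsum (experts N) (fun _ => 1) = INR N.
Proof. rewrite lsum_const, length_experts. ring. Qed.

(** * Real inequalities *)

Lemma ln_le_sub1 x : 0 < x -> ln x <= x - 1.
Proof. intros Hx. pose proof (exp_ineq1_le (ln x)) as H. rewrite exp_ln in H; lra. Qed.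

Lemma ln_ge_1_sub_inv x : 0 < x -> 1 - / x <= ln x.
Proof.
  intros Hx. pose proof (ln_le_sub1 (/ x) (Rinv_0_lt_compat _ Hx)) as H.
  rewrite ln_Rinv in H; lra.
Qed.

Lemma ln_1_plus_ge x : - / 2 <= x -> x - 2 * x * x <= ln (1 + x).
Proof.
  intros Hx. pose proof (ln_ge_1_sub_inv (1 + x) ltac:(lra)) as H.
  replace (1 - / (1 + x)) with (x / (1 + x)) in H by (field; lra).
  enough (x - 2 * x * x <= x / (1 + x)) by lra.
  apply Rle_div_r; [lra|]. nra.
Qed.

Lemma exp_le_exp x y : x <= y -> exp x <= exp y.
Proof. intros [Hlt | ->]; [left; apply exp_increasing | right]; auto. Qed.

Lemma ln_INR_nonneg n : (1 <= n)%nat -> 0 <= ln (INR n).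
Proof. intros Hn. rewrite <- ln_1. apply ln_le; [lra|]. apply (le_INR 1); auto. Qed.

Lemma mul_exp_neg_le eta g : 0 < eta -> 0 <= g -> g * exp (- (eta * g)) <= / eta.
Proof.
  intros He Hg. rewrite exp_Ropp.
  pose proof (exp_ineq1_le (eta * g)). pose proof (exp_pos (eta * g)).
  replace (g * / exp (eta * g)) with (eta * g / (eta * exp (eta * g))) by (field; lra).
  apply Rle_div_l; [nra|].
  replace (/ eta * (eta * exp (eta * g))) with (exp (eta * g)) by (field; lra). lra.
Qed.

(** * Rewards of the experts *)

Lemma bid_le N i v : bid N i v <= v.
Proof. apply Rmin_l. Qed.

Lemma rew_bid_nonneg N i v m : 0 <= rew (bid N i v) v m.
Proof. pose proof (bid_le N i v). unfold rew. destruct Rle_dec; lra. Qed.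

Lemma rew_bid_le_mu N i v m : rew (bid N i v) v m <= mu v m.
Proof.
  pose proof (bid_le N i v). pose proof (Rmax_l (v - m) 0). pose proof (Rmax_r (v - m) 0).
  unfold rew, mu. destruct Rle_dec; lra.
Qed.

Lemma mu_bounds v m : 0 <= v <= 1 -> 0 <= m -> 0 <= mu v m <= 1.
Proof. intros. split; [apply Rmax_r | apply Rmax_lub; lra]. Qed.

Lemma rew_bid_bounds N i v m : 0 <= v <= 1 -> 0 <= m -> 0 <= rew (bid N i v) v m <= 1.
Proof.
  intros Hv Hm. pose proof (rew_bid_le_mu N i v m). pose proof (mu_bounds v m Hv Hm).
  pose proof (rew_bid_nonneg N i v m). lra.
Qed.

(* An expert whose level [i/N] is at least [m] always wins, so it only loses its overbid. *)
Lemma mu_sub_rew_bid_le N i v m :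
  m <= INR i / INR N -> mu v m - rew (bid N i v) v m <= INR i / INR N - m.
Proof.
  intros Hm. unfold mu, rew, bid.
  destruct (Rle_dec m v) as [Hmv|Hmv].
  - rewrite Rmax_left by lra.
    destruct (Rle_dec m (Rmin v (INR i / INR N))) as [Hw|Hw].
    + pose proof (Rmin_r v (INR i / INR N)). lra.
    + exfalso. apply Hw, Rmin_glb; lra.
  - rewrite Rmax_right by lra. pose proof (Rmin_l v (INR i / INR N)).
    destruct Rle_dec; lra.
Qed.

Lemma grid_point N x : (1 <= N)%nat -> 0 <= x <= 1 ->
  exists i, (1 <= i <= N)%nat /\ x <= INR i / INR N /\ INR i / INR N <= x + / INR N /\
    forall j, (1 <= j)%nat -> x <= INR j / INR N -> (i <= j)%nat.
Proof.
  intros HN Hx. assert (HNp : 0 < INR N) by (apply lt_0_INR; lia).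
  set (P := fun j => (1 <= j)%nat /\ x <= INR j / INR N).
  destruct (dec_inh_nat_subset_has_unique_least_element P (fun n => classic (P n)))
    as [i [[[Hi1 Hix] Hmin] _]].
  { exists N. split; auto. unfold Rdiv. rewrite Rinv_r; lra. }
  assert (HiN : (i <= N)%nat) by (apply Hmin; split; auto; unfold Rdiv; rewrite Rinv_r; lra).
  exists i. repeat split; auto.
  - destruct (Nat.eq_dec i 1) as [->|Hne].
    + unfold Rdiv. simpl. lra.
    + assert (Hprev : INR (i - 1) / INR N < x).
      { apply Rnot_le_lt. intros Hle.
        assert (HP : P (i - 1)%nat) by (split; [lia | exact Hle]).
        specialize (Hmin _ HP). lia. }
      rewrite minus_INR in Hprev by lia. simpl INR in Hprev.
      unfold Rdiv in *. rewrite Rmult_minus_distr_r in Hprev. lra.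
  - intros j Hj Hjx. apply Hmin. split; auto.
Qed.

(* The least grid level above [m] beats every other expert: lower levels lose the
   auction, higher ones overpay. *)
Lemma rew_bid_le_least_grid N i j v m :
  (1 <= N)%nat -> (1 <= j)%nat -> m <= INR i / INR N ->
  (forall k, (1 <= k)%nat -> m <= INR k / INR N -> (i <= k)%nat) ->
  rew (bid N j v) v m <= rew (bid N i v) v m.
Proof.
  intros HN Hj Hmi Hmin. assert (HNp : 0 < INR N) by (apply lt_0_INR; lia).
  destruct (Rlt_le_dec (INR j / INR N) m) as [Hlow|Hhigh].
  - pose proof (rew_bid_nonneg N i v m). pose proof (Rmin_r v (INR j / INR N)).
    set (ri := rew (bid N i v) v m) in *. unfold rew, bid. destruct Rle_dec; lra.
  - assert (Hij : INR i / INR N <= INR j / INR N)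
      by (apply Rmult_le_compat_r; [left; apply Rinv_0_lt_compat; lra | apply le_INR; auto]).
    unfold rew, bid. unfold Rmin. repeat destruct Rle_dec; lra.
Qed.

(** * The combined policy *)

Definition range_ok (T : nat) (v m : nat -> R) : Prop :=
  forall t, (1 <= t <= T)%nat -> 0 <= v t <= 1 /\ 0 <= m t <= 1.

Definition is_distr (l : list nat) (p : nat -> R) : Prop :=
  (forall i, In i l -> 0 <= p i) /\ lsum l p = 1.

Lemma is_distr_normalize l f :
  (forall i, In i l -> 0 < f i) -> l <> nil -> is_distr l (fun i => f i / lsum l f).
Proof.
  intros Hf Hl. pose proof (lsum_pos l f Hf Hl). split.
  - intros i Hi. apply Rlt_le, Rdiv_lt_0_compat; auto.
  - unfold Rdiv. rewrite lsum_scalr. field. lra.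
Qed.

Lemma lsum_product_ge (l1 l2 : list nat) (a b : nat -> R) (X : nat -> nat -> R)
    (Y Z : nat -> R) (c : R) :
  is_distr l1 a -> is_distr l2 b ->
  (forall i j, In i l1 -> In j l2 -> Y i + Z j + c <= X i j) ->
  lsum l1 (fun i => a i * Y i) + lsum l2 (fun j => b j * Z j) + c <=
  lsum l1 (fun i => lsum l2 (fun j => a i * b j * X i j)).
Proof.
  intros [Ha Sa] [Hb Sb] HX.
  apply Rle_trans with (lsum l1 (fun i => lsum l2 (fun j => a i * b j * (Y i + Z j + c)))).
  - set (EZ := lsum l2 (fun j => b j * Z j)).
    assert (Hrow : forall i, lsum l2 (fun j => a i * b j * (Y i + Z j + c))
                             = a i * Y i + a i * (EZ + c)).
    { intros i.
      rewrite (lsum_ext l2 _ (fun j => (a i * Y i + a i * c) * b j + a i * (b j * Z j)))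
        by (intros; ring).
      rewrite lsum_plus, lsum_scal, lsum_scal, Sb. unfold EZ. ring. }
    rewrite (lsum_ext l1 _ _ (fun i _ => Hrow i)), lsum_plus, lsum_scalr, Sa. lra.
  - apply lsum_le; intros i Hi. apply lsum_le; intros j Hj.
    apply Rmult_le_compat_l; [apply Rmult_le_pos|]; auto.
Qed.

Definition ErewA (T : nat) (v m : nat -> R) (u : nat) : R :=
  lsum (experts T) (fun i => pA T v m u i * rew (bid T i (v u)) (v u) (m u)).

Definition ErewB (NB : nat) (etaB : R) (v m : nat -> R) (u : nat) : R :=
  lsum (experts NB) (fun j => pB NB etaB v m u j * rew (bid NB j (v u)) (v u) (m u)).

(* Effect of the update [w' = w (1 + eta (ra - rb))] of A's weight on the two potentials
   [ln (w + 1 - eta)] and [ln (w / (w + 1 - eta))]; [w / (w + 1 - eta)] is the probability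
   of following A. *)
Lemma mix_potential_B_step e w ra rb : 0 < e <= / 2 -> 0 < w ->
  0 <= ra <= 1 -> 0 <= rb <= 1 ->
  / e * (ln (w * (1 + e * (ra - rb)) + (1 - e)) - ln (w + (1 - e)))
    <= w / (w + (1 - e)) * (ra - rb).
Proof.
  intros He Hw Hra Hrb.
  set (a := 1 - e). set (p := w / (w + a)). set (w' := w * (1 + e * (ra - rb))).
  assert (Ha : 0 < a) by (unfold a; lra).
  assert (Hw' : 0 < w') by (unfold w'; apply Rmult_lt_0_compat; nra).
  assert (Hratio : (w' + a) / (w + a) = 1 + e * p * (ra - rb)) by (unfold w', p; field; lra).
  assert (Hpos : 0 < 1 + e * p * (ra - rb))
    by (rewrite <- Hratio; apply Rdiv_lt_0_compat; lra).
  assert (Hgrowth : ln (w' + a) - ln (w + a) <= e * p * (ra - rb)).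
  { rewrite <- ln_div, Hratio by lra. pose proof (ln_le_sub1 _ Hpos). lra. }
  apply Rmult_le_reg_l with e; [lra|]. rewrite <- Rmult_assoc, Rinv_r by lra. lra.
Qed.

Lemma mix_potential_A_step e w ra rb : 0 < e <= / 2 -> 0 < w ->
  0 <= ra <= 1 -> 0 <= rb <= 1 ->
  (1 - w / (w + (1 - e))) * (ra - rb) - 2 * e
    <= / e * (ln (w * (1 + e * (ra - rb)) / (w * (1 + e * (ra - rb)) + (1 - e)))
              - ln (w / (w + (1 - e)))).
Proof.
  intros He Hw Hra Hrb.
  set (a := 1 - e). set (p := w / (w + a)). set (x := e * (ra - rb)).
  assert (Ha : 0 < a) by (unfold a; lra).
  assert (Hx : - / 2 <= x <= / 2) by (unfold x; split; nra).
  assert (Hw' : 0 < w * (1 + x)) by (apply Rmult_lt_0_compat; lra).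
  assert (Hp : 0 <= p <= 1).
  { split; [apply Rlt_le, Rdiv_lt_0_compat; lra | apply (Rdiv_le_1 w (w + a)); lra]. }
  assert (Hpx : 0 < 1 + p * x) by nra.
  assert (Hdiff : ln (w * (1 + x) / (w * (1 + x) + a)) - ln p = ln (1 + x) - ln (1 + p * x)).
  { replace (w * (1 + x) / (w * (1 + x) + a)) with (p * ((1 + x) / (1 + p * x)))
      by (unfold p; field; split; lra).
    rewrite ln_mult, ln_div; [ring | lra | lra | apply Rdiv_lt_0_compat; lra
                               | apply Rdiv_lt_0_compat; lra]. }
  rewrite Hdiff.
  assert (ln (1 + p * x) <= p * x) by (pose proof (ln_le_sub1 (1 + p * x) Hpx); lra).
  assert (x - 2 * x * x <= ln (1 + x)) by (apply ln_1_plus_ge; lra).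
  assert (Hxx : x * x <= e * e).
  { replace (x * x) with (e * e * ((ra - rb) * (ra - rb))) by (unfold x; ring).
    assert ((ra - rb) * (ra - rb) <= 1) by nra. nra. }
  assert (HD : (1 - p) * x - 2 * e * e <= ln (1 + x) - ln (1 + p * x)) by nra.
  apply Rmult_le_compat_l with (r := / e) in HD; [|left; apply Rinv_0_lt_compat; lra].
  replace (/ e * ((1 - p) * x - 2 * e * e)) with ((1 - p) * (ra - rb) - 2 * e) in HD
    by (unfold x; field; lra).
  exact HD.
Qed.

Section Combination.
Variables (T NB : nat) (etaB : R) (v m : nat -> R).
Hypothesis Heta : 0 < etaP T <= / 2.

Definition round_ok (u : nat) : Prop :=
  is_distr (experts T) (pA T v m u) /\ is_distr (experts NB) (pB NB etaB v m u) /\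
  0 <= v u <= 1 /\ 0 <= m u.

(* The potential [ln (w + 1 - eta) / eta] grows by at most the expected advantage of A
   over B in each round. *)
Lemma expRewFrom_ge_B f : forall t w, 0 < w ->
  (forall u, (t <= u < t + f)%nat -> round_ok u) ->
  lsum (seq t f) (ErewB NB etaB v m) - / etaP T * (ln (w + (1 - etaP T)) - ln (1 - etaP T))
    <= expRewFrom T NB etaB v m f t w.
Proof.
  set (e := etaP T). assert (He : 0 < e <= / 2) by exact Heta.
  induction f as [|f IH]; intros t w Hw Hok.
  - assert (ln (1 - e) <= ln (w + (1 - e))) by (apply ln_le; lra).
    assert (0 < / e) by (apply Rinv_0_lt_compat; lra).
    simpl. nra.
  - destruct (Hok t ltac:(lia)) as [HA [HB [Hv Hm]]].
    simpl expRewFrom. cbv zeta. fold e.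
    set (Rest := lsum (seq (S t) f) (ErewB NB etaB v m)).
    change (lsum (seq t (S f)) (ErewB NB etaB v m)) with (ErewB NB etaB v m t + Rest).
    set (K := Rest - / e * (ln (w + (1 - e)) - ln (1 - e))).
    apply Rle_trans with (lsum (experts T) (fun i => pA T v m t i * 0)
      + lsum (experts NB) (fun j => pB NB etaB v m t j * rew (bid NB j (v t)) (v t) (m t)) + K).
    { rewrite (lsum_ext (experts T) _ (fun _ => 0 * 0)), lsum_const by (intros; ring).
      unfold K, ErewB. lra. }
    apply lsum_product_ge; auto. intros i j _ _.
    set (ra := rew (bid T i (v t)) (v t) (m t)).
    set (rb := rew (bid NB j (v t)) (v t) (m t)).
    assert (Hra : 0 <= ra <= 1) by (apply rew_bid_bounds; auto).
    assert (Hrb : 0 <= rb <= 1) by (apply rew_bid_bounds; auto).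
    pose proof (mix_potential_B_step e w ra rb He Hw Hra Hrb).
    assert (Hw' : 0 < w * (1 + e * (ra - rb))) by (apply Rmult_lt_0_compat; nra).
    specialize (IH (S t) _ Hw' ltac:(intros; apply Hok; lia)). fold Rest in IH.
    unfold K. lra.
Qed.

(* The potential [ln (w / (w + 1 - eta)) / eta] is the log-probability of following A. *)
Lemma expRewFrom_ge_A f : forall t w, 0 < w ->
  (forall u, (t <= u < t + f)%nat -> round_ok u) ->
  lsum (seq t f) (ErewA T v m) + / etaP T * ln (w / (w + (1 - etaP T))) - 2 * etaP T * INR f
    <= expRewFrom T NB etaB v m f t w.
Proof.
  set (e := etaP T). assert (He : 0 < e <= / 2) by exact Heta.
  induction f as [|f IH]; intros t w Hw Hok.
  - assert (ln (w / (w + (1 - e))) <= 0).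
    { rewrite <- ln_1. apply ln_le; [apply Rdiv_lt_0_compat; lra|].
      apply (Rdiv_le_1 w (w + (1 - e))); lra. }
    assert (0 < / e) by (apply Rinv_0_lt_compat; lra).
    simpl. nra.
  - destruct (Hok t ltac:(lia)) as [HA [HB [Hv Hm]]].
    simpl expRewFrom. cbv zeta. fold e.
    set (Rest := lsum (seq (S t) f) (ErewA T v m)).
    change (lsum (seq t (S f)) (ErewA T v m)) with (ErewA T v m t + Rest).
    set (K := Rest + / e * ln (w / (w + (1 - e))) - 2 * e * INR (S f)).
    apply Rle_trans with
      (lsum (experts T) (fun i => pA T v m t i * rew (bid T i (v t)) (v t) (m t))
       + lsum (experts NB) (fun j => pB NB etaB v m t j * 0) + K).
    { rewrite (lsum_ext (experts NB) _ (fun _ => 0 * 0)), lsum_const by (intros; ring).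
      unfold K, ErewA. lra. }
    apply lsum_product_ge; auto. intros i j _ _.
    set (ra := rew (bid T i (v t)) (v t) (m t)).
    set (rb := rew (bid NB j (v t)) (v t) (m t)).
    assert (Hra : 0 <= ra <= 1) by (apply rew_bid_bounds; auto).
    assert (Hrb : 0 <= rb <= 1) by (apply rew_bid_bounds; auto).
    pose proof (mix_potential_A_step e w ra rb He Hw Hra Hrb).
    assert (Hw' : 0 < w * (1 + e * (ra - rb))) by (apply Rmult_lt_0_compat; nra).
    specialize (IH (S t) _ Hw' ltac:(intros; apply Hok; lia)). fold Rest in IH.
    unfold K. rewrite S_INR. lra.
Qed.

End Combination.

(** * Policy B *)

Lemma pB_distr NB etaB v m t : (1 <= NB)%nat -> is_distr (experts NB) (pB NB etaB v m t).
Proof.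
  intros HN. apply is_distr_normalize; [|apply experts_nonnil; auto].
  intros; apply exp_pos.
Qed.

Lemma ErewB_nonneg NB etaB v m t : (1 <= NB)%nat -> 0 <= ErewB NB etaB v m t.
Proof.
  intros HN. destruct (pB_distr NB etaB v m t HN) as [Hp _].
  apply lsum_nonneg. intros j Hj. apply Rmult_le_pos; auto. apply rew_bid_nonneg.
Qed.

Lemma startB_spec m t : (1 <= t)%nat ->
  (1 <= startB m t <= t)%nat /\ forall u, (startB m t < u < t)%nat -> m u = m (u - 1)%nat.
Proof.
  induction t as [|[|k] IH]; intros Ht; [lia | simpl; split; [lia | intros; lia] |].
  destruct (IH ltac:(lia)) as [Hrange Hconst].
  change (startB m (S (S k))) with
    (if andb (Nat.ltb (startB m (S k)) (S k)) (if Req_EM_T (m (S k)) (m k) then false else true)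
     then S (S k) else startB m (S k)).
  set (s0 := startB m (S k)) in *. clearbody s0.
  destruct (Nat.ltb_spec s0 (S k)); simpl; [|split; [lia | intros; lia]].
  destruct (Req_EM_T (m (S k)) (m k)) as [Heq|Hne]; simpl; [|split; [lia | intros; lia]].
  split; [lia|]. intros u Hu.
  destruct (Nat.eq_dec u (S k)) as [->|Hne]; [rewrite Heq; f_equal; lia | apply Hconst; lia].
Qed.

Lemma startB_const m t : (2 <= t)%nat -> m t = m (t - 1)%nat ->
  forall s, (startB m t <= s <= t)%nat -> m s = m t.
Proof.
  intros Ht Heq. destruct (startB_spec m t ltac:(lia)) as [_ Hconst].
  intros s Hs. remember (t - s)%nat as d eqn:Hd.
  revert s Hs Hd. induction d as [|d IH]; intros s Hs Hd; [f_equal; lia|].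
  destruct (Nat.eq_dec s (t - 1)) as [->|Hne]; [auto|].
  rewrite <- (IH (S s)) by lia. rewrite (Hconst (S s)) by lia. f_equal; lia.
Qed.

Lemma lsum_mul_exp_neg_le N eta (p g : nat -> R) : 0 < eta ->
  (forall j, In j (experts N) -> 0 <= g j /\ p j <= exp (- (eta * g j))) ->
  lsum (experts N) (fun j => p j * g j) <= INR N / eta.
Proof.
  intros He Hpg. unfold Rdiv. rewrite <- lsum_experts_1, <- lsum_scalr.
  apply lsum_le. intros j Hj. destruct (Hpg j Hj) as [Hg Hp].
  rewrite Rmult_1_l. eapply Rle_trans; [apply Rmult_le_compat_r; eauto|].
  rewrite Rmult_comm. apply mul_exp_neg_le; auto.
Qed.

Section StableRound.
Variables (NB : nat) (etaB : R) (v m : nat -> R) (t : nat).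
Hypotheses (HNB : (1 <= NB)%nat) (HetaB : 0 < etaB) (Ht : (2 <= t)%nat)
  (Hstable : m t = m (t - 1)%nat)
  (Hrange : forall s, (startB m t <= s <= t)%nat -> 0 <= v s <= 1 /\ 0 <= m s <= 1).

Let r j s := rew (bid NB j (v s)) (v s) (m s).

(* In a round where [m] did not change, [m] is constant on the whole batch, so the
   expert [i] at the least grid level above it leads on every round of the batch,
   including the predicted round [t]. *)
Lemma pB_le_exp_neg_gap i j :
  (1 <= j)%nat -> (1 <= i <= NB)%nat -> m t <= INR i / INR NB ->
  (forall k, (1 <= k)%nat -> m t <= INR k / INR NB -> (i <= k)%nat) ->
  pB NB etaB v m t j <= exp (- (etaB * (r i t - r j t))).
Proof.
  intros Hj Hi Hmi Hmin.
  set (t0 := startB m t).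
  set (Sc k := lsum (seq t0 (t - t0)) (r k) + r k t).
  assert (Hscore : forall k, scoreB NB etaB v m t k = exp (etaB * Sc k)).
  { intros k. assert (Hprev : prevm m t = m t)
      by (destruct t as [|[|k']]; try lia; simpl in *; rewrite Hstable; f_equal; lia).
    unfold scoreB. rewrite Hprev. reflexivity. }
  assert (Hlead : lsum (seq t0 (t - t0)) (r j) <= lsum (seq t0 (t - t0)) (r i)).
  { apply lsum_le. intros s Hs. apply in_seq in Hs.
    unfold r. rewrite (startB_const m t Ht Hstable s) by (unfold t0 in Hs; lia).
    apply rew_bid_le_least_grid; auto. }
  assert (Hsum : exp (etaB * Sc i) <= lsum (experts NB) (scoreB NB etaB v m t)).
  { rewrite <- Hscore. apply lsum_ge_term; [apply in_experts; lia|].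
    intros; left; apply exp_pos. }
  pose proof (exp_pos (etaB * Sc i)). pose proof (exp_pos (etaB * Sc j)).
  unfold pB. rewrite Hscore.
  apply Rle_trans with (exp (etaB * Sc j) / exp (etaB * Sc i)).
  - apply Rmult_le_compat_l; [lra|]. apply Rinv_le_contravar; auto.
  - unfold Rdiv. rewrite <- exp_Ropp, <- exp_plus.
    apply exp_le_exp. unfold Sc. nra.
Qed.

Lemma regretB_stable_round : mu (v t) (m t) - ErewB NB etaB v m t <= / INR NB + INR NB / etaB.
Proof.
  destruct (startB_spec m t ltac:(lia)) as [Ht0 _].
  destruct (Hrange t ltac:(lia)) as [Hvt Hmt].
  destruct (grid_point NB (m t) HNB Hmt) as [i [Hi [Hmi [HiN Hmin]]]].
  destruct (pB_distr NB etaB v m t HNB) as [Hp0 Hp1].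
  set (p := pB NB etaB v m t) in *.
  assert (Hsplit : mu (v t) (m t) - ErewB NB etaB v m t
                   = (mu (v t) (m t) - r i t) + lsum (experts NB) (fun j => p j * (r i t - r j t))).
  { unfold ErewB. fold p.
    rewrite (lsum_ext _ (fun j => p j * (r i t - r j t)) (fun j => r i t * p j - p j * r j t))
      by (intros; ring).
    rewrite lsum_minus, lsum_scal, Hp1. unfold r. ring. }
  assert (Hi_regret : mu (v t) (m t) - r i t <= / INR NB)
    by (unfold r; pose proof (mu_sub_rew_bid_le NB i (v t) (m t) Hmi); lra).
  assert (Hgaps : lsum (experts NB) (fun j => p j * (r i t - r j t)) <= INR NB / etaB).
  { apply lsum_mul_exp_neg_le; auto. intros j Hj. apply in_experts in Hj. split.
    - unfold r. pose proof (rew_bid_le_least_grid NB i j (v t) (m t) HNB ltac:(lia) Hmi Hmin). lra.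
    - apply pB_le_exp_neg_gap; auto; lia. }
  lra.
Qed.

End StableRound.

Lemma regretB_total T NB etaB v m : (1 <= T)%nat -> (1 <= NB)%nat -> 0 < etaB ->
  range_ok T v m ->
  lsum (seq 1 T) (fun t => mu (v t) (m t) - ErewB NB etaB v m t)
    <= LT T m + 1 + INR T * (/ INR NB + INR NB / etaB).
Proof.
  intros HT HN He Hr.
  set (K := / INR NB + INR NB / etaB).
  assert (HK : 0 <= K).
  { assert (HNp : 0 < INR NB) by (apply lt_0_INR; lia).
    pose proof (Rinv_0_lt_compat _ HNp). pose proof (Rdiv_lt_0_compat _ _ HNp He).
    unfold K. lra. }
  assert (Hround : forall t, (1 <= t <= T)%nat -> mu (v t) (m t) - ErewB NB etaB v m t <= 1).
  { intros t Ht. destruct (Hr t Ht) as [Hv Hm].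
    pose proof (mu_bounds _ _ Hv (proj1 Hm)). pose proof (ErewB_nonneg NB etaB v m t HN). lra. }
  destruct T as [|T']; [lia|].
  change (seq 1 (S T')) with (1%nat :: seq 2 T'). rewrite lsum_cons.
  unfold LT. replace (S T' - 1)%nat with T' by lia.
  assert (Hrest : lsum (seq 2 T') (fun t => mu (v t) (m t) - ErewB NB etaB v m t) <=
     lsum (seq 2 T') (fun t => (if Req_EM_T (m t) (m (t - 1)%nat) then 0 else 1) + K)).
  { apply lsum_le. intros t Ht. apply in_seq in Ht.
    destruct (Req_EM_T (m t) (m (t - 1)%nat)) as [Heq|Hne].
    - assert (Hr' : forall s, (startB m t <= s <= t)%nat -> 0 <= v s <= 1 /\ 0 <= m s <= 1).
      { intros s Hs. destruct (startB_spec m t ltac:(lia)) as [[? ?] _]. apply Hr; lia. }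
      pose proof (regretB_stable_round NB etaB v m t HN He ltac:(lia) Heq Hr') as Hstable.
      fold K in Hstable. lra.
    - pose proof (Hround t ltac:(lia)). lra. }
  rewrite lsum_plus, lsum_const, length_seq in Hrest.
  pose proof (Hround 1%nat ltac:(lia)). rewrite S_INR. pose proof (pos_INR T'). nra.
Qed.

(** * Policy A *)

Definition ellA (T : nat) (v m : nat -> R) (u i : nat) : R :=
  mu (v u) (m u) - rew (bid T i (v u)) (v u) (m u).

Definition lossA (T : nat) (v m : nat -> R) (u : nat) : R := mu (v u) (m u) - ErewA T v m u.

(* Variation of [m] over the rounds [1 .. t-1]. *)
Definition var_before (m : nat -> R) (t : nat) : R :=
  lsum (seq 2 (t - 2)) (fun u => Rabs (m u - m (u - 1)%nat)).

Definition next_Vcur (s : stA) (mt mprev : R) : R :=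
  if Nat.eqb (lenA s) 0 then VcurA s else VcurA s + Rabs (mt - mprev).

Definition prod_weights (T : nat) (s : stA) (vt mt : R) (i : nat) : R :=
  (1 + / 2 * (rew (bid T i vt) vt mt - mu vt mt)) * probA T s i.

Lemma stepA_unfold T s vt mt mprev :
  stepA T s vt mt mprev =
  if Rlt_dec (INR (S (lenA s))) (sqrt (INR T / (VprevA s + next_Vcur s mt mprev + / INR T)))
  then mkA (prod_weights T s vt mt) (S (lenA s)) (VprevA s) (next_Vcur s mt mprev)
  else mkA (fun _ => 1) 0 (VprevA s + next_Vcur s mt mprev) 0.
Proof. reflexivity. Qed.

Lemma stateA_S T v m t : (1 <= t)%nat ->
  stateA T v m (S t) = stepA T (stateA T v m t) (v t) (m t) (m (t - 1)%nat).
Proof. intros Ht. destruct t as [|k]; [lia|]. simpl. rewrite Nat.sub_0_r. reflexivity. Qed.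

Lemma var_before_S m t : (2 <= t)%nat ->
  var_before m (S t) = var_before m t + Rabs (m t - m (t - 1)%nat).
Proof.
  intros Ht. unfold var_before. replace (S t - 2)%nat with ((t - 2) + 1)%nat by lia.
  rewrite seq_app, lsum_app. replace (2 + (t - 2))%nat with t by lia.
  simpl. lra.
Qed.

Lemma var_before_le_S m t : (1 <= t)%nat -> var_before m t <= var_before m (S t).
Proof.
  intros Ht. destruct (Nat.eq_dec t 1) as [->|Hne].
  - unfold var_before. simpl. lra.
  - rewrite var_before_S by lia. pose proof (Rabs_pos (m t - m (t - 1)%nat)). lra.
Qed.

Lemma var_before_VT T m : var_before m (S T) = VT T m.
Proof. unfold var_before, VT. replace (S T - 2)%nat with (T - 1)%nat by lia. reflexivity. Qed.

(* At the start of round [t] the current batch consists of the rounds [t - lenA s .. t-1];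
   [J] counts the completed batches, each of length at least [sqrt (T / (Vprev + 1/T))]. *)
Record invA (T : nat) (v m : nat -> R) (t : nat) (s : stA) : Prop := {
  invA_w_pos : forall i, (1 <= i <= T)%nat -> 0 < wA s i;
  invA_len_le : (lenA s <= t - 1)%nat;
  invA_Vcur_0 : lenA s = 0%nat -> VcurA s = 0;
  invA_len_lt : (0 < lenA s)%nat ->
    INR (lenA s) < sqrt (INR T / (VprevA s + VcurA s + / INR T));
  invA_Vprev_nonneg : 0 <= VprevA s;
  invA_Vcur_nonneg : 0 <= VcurA s;
  invA_drift : forall u, (t - lenA s <= u <= t - 1)%nat ->
    Rabs (m u - m (t - 1)%nat) <= VcurA s;
  invA_var_le : VprevA s + VcurA s <= var_before m t;
  invA_batch_regret : forall i, (1 <= i <= T)%nat ->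
    lsum (seq (t - lenA s) (lenA s)) (lossA T v m) <=
      2 * ln (INR T) + 2 * ln (probA T s i)
      + 2 * lsum (seq (t - lenA s) (lenA s)) (fun u => ellA T v m u i);
  invA_closed : exists J : nat,
    lsum (seq 1 (t - lenA s - 1)) (lossA T v m) <=
      INR J * (2 * ln (INR T) + 1) + 8 * sqrt (INR T) * sqrt (VprevA s + / INR T)
      + 2 * INR (t - lenA s - 1) / INR T
    /\ INR J * sqrt (INR T / (VprevA s + / INR T)) <= INR (t - lenA s - 1)
}.

Arguments invA_w_pos {T v m t s}.
Arguments invA_len_le {T v m t s}.
Arguments invA_Vcur_0 {T v m t s}.
Arguments invA_len_lt {T v m t s}.
Arguments invA_Vprev_nonneg {T v m t s}.
Arguments invA_Vcur_nonneg {T v m t s}.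
Arguments invA_drift {T v m t s}.
Arguments invA_var_le {T v m t s}.
Arguments invA_batch_regret {T v m t s}.
Arguments invA_closed {T v m t s}.

Lemma probA_uniform T Vp i : probA T (mkA (fun _ => 1) 0 Vp 0) i = / INR T.
Proof. unfold probA. simpl wA. rewrite lsum_experts_1. unfold Rdiv. ring. Qed.

Lemma invA_init T v m : (1 <= T)%nat -> invA T v m 1 initA.
Proof.
  intros HT. assert (0 < INR T) by (apply lt_0_INR; lia).
  split; simpl; try (intros; lia); try (intros; lra).
  - unfold var_before. simpl. lra.
  - intros i _. unfold initA. rewrite probA_uniform, ln_Rinv by auto. simpl. lra.
  - exists 0%nat. pose proof (sqrt_pos (INR T)). pose proof (sqrt_pos (0 + / INR T)).
    simpl. unfold Rdiv. nra.
Qed.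

(* One step of Prod with learning rate 1/2 and losses in [0, 1]. *)
Lemma prod_update_regret (l : list nat) (p ell : nat -> R) i :
  (forall j, In j l -> 0 < p j) -> lsum l p = 1 ->
  (forall j, In j l -> 0 <= ell j <= 1) -> In i l ->
  lsum l (fun j => p j * ell j) <=
    2 * ln ((1 - ell i / 2) * p i / lsum l (fun j => (1 - ell j / 2) * p j))
    - 2 * ln (p i) + 2 * ell i.
Proof.
  intros Hp Hs He Hi.
  set (Ls := lsum l (fun j => p j * ell j)).
  assert (HLs : 0 <= Ls <= 1).
  { split.
    - apply lsum_nonneg; intros j Hj. apply Rmult_le_pos; [left; apply Hp | apply He]; auto.
    - rewrite <- Hs. apply lsum_le; intros j Hj.
      specialize (Hp j Hj). specialize (He j Hj). nra. }
  assert (HW : lsum l (fun j => (1 - ell j / 2) * p j) = 1 - Ls / 2).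
  { rewrite (lsum_ext l _ (fun j => p j - / 2 * (p j * ell j))) by (intros; field).
    rewrite lsum_minus, lsum_scal, Hs. unfold Ls. field. }
  rewrite HW. specialize (Hp i Hi). specialize (He i Hi).
  rewrite ln_div, ln_mult by (try apply Rmult_lt_0_compat; lra).
  assert (ln (1 - Ls / 2) <= - (Ls / 2)) by (pose proof (ln_le_sub1 (1 - Ls / 2)); lra).
  assert (1 - / (1 - ell i / 2) <= ln (1 - ell i / 2)) by (apply ln_ge_1_sub_inv; lra).
  assert (- ell i <= 1 - / (1 - ell i / 2)).
  { replace (1 - / (1 - ell i / 2)) with (- (ell i / 2) / (1 - ell i / 2)) by (field; lra).
    apply Rle_div_r; [lra | nra]. }
  lra.
Qed.

Lemma pA_distr T v m t : (1 <= T)%nat ->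
  (forall i, (1 <= i <= T)%nat -> 0 < wA (stateA T v m t) i) ->
  is_distr (experts T) (pA T v m t) /\ (forall i, In i (experts T) -> 0 < pA T v m t i).
Proof.
  intros HT Hw.
  assert (Hw' : forall i, In i (experts T) -> 0 < wA (stateA T v m t) i)
    by (intros i Hi; apply Hw, in_experts; auto).
  split; [apply is_distr_normalize; auto; apply experts_nonnil; auto|].
  intros i Hi. apply Rdiv_lt_0_compat; auto. apply lsum_pos; auto. apply experts_nonnil; auto.
Qed.

Lemma lossA_eq_expect T v m t : lsum (experts T) (pA T v m t) = 1 ->
  lossA T v m t = lsum (experts T) (fun i => pA T v m t i * ellA T v m t i).
Proof.
  intros Hs. unfold lossA, ErewA, ellA.
  rewrite (lsum_ext _ (fun i => pA T v m t i * (mu (v t) (m t) - rew (bid T i (v t)) (v t) (m t)))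
     (fun i => mu (v t) (m t) * pA T v m t i - pA T v m t i * rew (bid T i (v t)) (v t) (m t)))
    by (intros; ring).
  rewrite lsum_minus, lsum_scal, Hs. ring.
Qed.

Lemma ellA_bounds T v m u i : 0 <= v u <= 1 -> 0 <= m u -> 0 <= ellA T v m u i <= 1.
Proof.
  intros Hv Hm. unfold ellA. pose proof (rew_bid_le_mu T i (v u) (m u)).
  pose proof (rew_bid_nonneg T i (v u) (m u)). pose proof (mu_bounds _ _ Hv Hm). lra.
Qed.

Lemma lossA_bounds T v m t : is_distr (experts T) (pA T v m t) -> 0 <= v t <= 1 -> 0 <= m t ->
  0 <= lossA T v m t <= 1.
Proof.
  intros [Hp0 Hp1] Hv Hm. rewrite lossA_eq_expect by auto. split.
  - apply lsum_nonneg. intros i Hi. apply Rmult_le_pos; auto. apply ellA_bounds; auto.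
  - rewrite <- Hp1. apply lsum_le. intros i Hi. pose proof (ellA_bounds T v m t i Hv Hm).
    specialize (Hp0 i Hi). nra.
Qed.

(* Compare with the grid expert just above [m_(t-1) + Vcur], which is above every
   [m_u] of the batch and loses at most [2 Vcur + 1/T] per round. *)
Lemma batch_regret T v m t : (1 <= T)%nat -> (1 <= t <= S T)%nat -> range_ok T v m ->
  invA T v m t (stateA T v m t) ->
  let s := stateA T v m t in
  lsum (seq (t - lenA s) (lenA s)) (lossA T v m)
    <= 2 * ln (INR T) + 2 * INR (lenA s) * (2 * VcurA s + / INR T).
Proof.
  intros HT Ht Hr HI s. fold s in HI.
  pose proof (ln_INR_nonneg T HT).
  assert (HTp : 0 < INR T) by (apply lt_0_INR; lia).
  set (L := lenA s). set (V := VcurA s).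
  destruct (Nat.eq_dec L 0) as [HL0|HL0]; [rewrite HL0; simpl; pose proof (pos_INR 0); nra|].
  pose proof (invA_len_le HI) as HL. fold L in HL.
  destruct (Hr (t - 1)%nat ltac:(lia)) as [_ Hm1].
  pose proof (invA_Vcur_nonneg HI) as HV. fold V in HV.
  set (x := Rmin 1 (m (t - 1)%nat + V)).
  assert (Hx : 0 <= x <= 1) by (unfold x, Rmin; destruct Rle_dec; lra).
  destruct (grid_point T x HT Hx) as [i [Hi [Hxi [Hix _]]]].
  destruct (pA_distr T v m t HT (invA_w_pos HI)) as [[Hp0 Hp1] Hpos].
  assert (Hin : In i (experts T)) by (apply in_experts; auto).
  assert (Hlnp : ln (probA T s i) <= 0).
  { rewrite <- ln_1. apply ln_le; [apply Hpos; auto|].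
    rewrite <- Hp1. apply lsum_ge_term; auto. }
  assert (Hell : lsum (seq (t - L) L) (fun u => ellA T v m u i) <= INR L * (2 * V + / INR T)).
  { apply Rle_trans with (lsum (seq (t - L) L) (fun _ => 2 * V + / INR T));
      [|rewrite lsum_const, length_seq; lra].
    apply lsum_le. intros u Hu. apply in_seq in Hu.
    destruct (Hr u ltac:(lia)) as [Hvu Hmu].
    pose proof (invA_drift HI u ltac:(fold L; lia)) as Hd.
    apply Rabs_le_between in Hd. fold V in Hd.
    assert (Hmx : m u <= x) by (unfold x, Rmin; destruct Rle_dec; lra).
    pose proof (mu_sub_rew_bid_le T i (v u) (m u) ltac:(lra)).
    assert (x <= m (t - 1)%nat + V) by apply Rmin_r.
    unfold ellA. lra. }
  pose proof (invA_batch_regret HI i Hi) as Hprod. fold L in Hprod. lra.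
Qed.

(* [V = (sqrt (a+V) - sqrt a) (sqrt (a+V) + sqrt a)] and [L sqrt (a+V) < sqrt T]. *)
Lemma mul_le_sqrt_increment T a V L : 0 < T -> 0 < a -> 0 <= V -> 0 <= L ->
  L < sqrt (T / (a + V)) -> L * V <= 2 * sqrt T * (sqrt (a + V) - sqrt a).
Proof.
  intros HT Ha HV HL HLt.
  assert (HA : 0 < sqrt (a + V)) by (apply sqrt_lt_R0; lra).
  assert (HB : 0 <= sqrt a) by apply sqrt_pos.
  assert (HAB : sqrt a <= sqrt (a + V)) by (apply sqrt_le_1_alt; lra).
  assert (HV2 : V = sqrt (a + V) * sqrt (a + V) - sqrt a * sqrt a)
    by (rewrite !sqrt_sqrt; lra).
  rewrite sqrt_div in HLt by lra.
  apply Rlt_div_r in HLt; [|exact HA].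
  set (A := sqrt (a + V)) in *. set (B := sqrt a) in *.
  assert (L * (A - B) * (A + B) <= L * (A - B) * (2 * A))
    by (apply Rmult_le_compat_l; [apply Rmult_le_pos|]; lra).
  assert (L * A * (A - B) <= sqrt T * (A - B)) by (apply Rmult_le_compat_r; lra).
  rewrite HV2. nra.
Qed.

Lemma next_Vcur_spec T v m t s : (1 <= t)%nat -> invA T v m t s ->
  let Vc := next_Vcur s (m t) (m (t - 1)%nat) in
  VcurA s <= Vc /\ VprevA s + Vc <= var_before m (S t) /\
  forall u, (t - lenA s <= u <= t)%nat -> Rabs (m u - m t) <= Vc.
Proof.
  intros Ht HI Vc. unfold Vc, next_Vcur.
  pose proof (invA_var_le HI). pose proof (invA_Vcur_nonneg HI).
  destruct (Nat.eqb_spec (lenA s) 0) as [HL0|HL0].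
  - rewrite (invA_Vcur_0 HI HL0) in *. pose proof (var_before_le_S m t Ht).
    repeat split; try lra.
    intros u Hu. replace u with t by lia. rewrite Rminus_diag, Rabs_R0. lra.
  - pose proof (invA_len_le HI).
    pose proof (Rabs_pos (m t - m (t - 1)%nat)).
    rewrite var_before_S by lia. repeat split; try lra.
    intros u Hu. destruct (Nat.eq_dec u t) as [->|Hne].
    + rewrite Rminus_diag, Rabs_R0. lra.
    + pose proof (invA_drift HI u ltac:(lia)).
      pose proof (Rabs_triang (m u - m (t - 1)%nat) (m (t - 1)%nat - m t)) as Htri.
      rewrite (Rabs_minus_sym (m (t - 1)%nat)) in Htri.
      replace (m u - m (t - 1)%nat + (m (t - 1)%nat - m t)) with (m u - m t) in Htri by ring.
      lra.
Qed.

(* Closing the current batch: its regret [2 ln T + 2 L (2 Vcur + 1/T)] is absorbed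
   by one more [2 ln T + 1] and the telescoping increment of [8 sqrt T sqrt (V + 1/T)]. *)
Lemma invA_close_batch T v m t W : (1 <= T)%nat -> (1 <= t <= S T)%nat -> range_ok T v m ->
  invA T v m t (stateA T v m t) ->
  VprevA (stateA T v m t) + VcurA (stateA T v m t) <= W ->
  exists J : nat,
    lsum (seq 1 (t - 1)) (lossA T v m) + 1 <=
      INR (S J) * (2 * ln (INR T) + 1) + 8 * sqrt (INR T) * sqrt (W + / INR T)
      + 2 * INR (t - 1) / INR T
    /\ INR J * sqrt (INR T / (W + / INR T)) <= INR (t - lenA (stateA T v m t) - 1).
Proof.
  intros HT Ht Hr HI HW.
  pose proof (batch_regret T v m t HT Ht Hr HI) as Hbatch. cbv zeta in Hbatch.
  set (s := stateA T v m t) in *.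
  set (L := lenA s) in *. set (V := VcurA s) in *. set (Vp := VprevA s) in *.
  destruct (invA_closed HI) as [J [Hclosed HJ]]. fold L Vp in Hclosed, HJ.
  pose proof (invA_len_le HI) as HL. fold L in HL.
  pose proof (invA_Vprev_nonneg HI) as HVp. pose proof (invA_Vcur_nonneg HI) as HV.
  fold Vp V in HVp, HV.
  assert (HTp : 0 < INR T) by (apply lt_0_INR; lia).
  assert (HiT : 0 < / INR T) by (apply Rinv_0_lt_compat; lra).
  pose proof (sqrt_pos (INR T)) as HsT.
  assert (Hincr : INR L * V <= 2 * sqrt (INR T) * (sqrt (Vp + / INR T + V) - sqrt (Vp + / INR T))).
  { destruct (Nat.eq_dec L 0) as [HL0|HL0].
    - rewrite HL0. simpl. assert (sqrt (Vp + / INR T) <= sqrt (Vp + / INR T + V))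
        by (apply sqrt_le_1_alt; lra). nra.
    - apply mul_le_sqrt_increment; try lra; [apply pos_INR|].
      replace (Vp + / INR T + V) with (Vp + V + / INR T) by ring.
      apply (invA_len_lt HI). fold L. lia. }
  assert (sqrt (Vp + / INR T + V) <= sqrt (W + / INR T)) by (apply sqrt_le_1_alt; lra).
  exists J. split.
  - replace (seq 1 (t - 1)) with (seq 1 (t - L - 1) ++ seq (t - L) L)
      by (replace (t - L)%nat with (1 + (t - L - 1))%nat at 2 by lia;
          rewrite <- seq_app; f_equal; lia).
    rewrite lsum_app.
    replace (INR (t - 1)) with (INR (t - L - 1) + INR L) by (rewrite <- plus_INR; f_equal; lia).
    rewrite S_INR. unfold Rdiv in *. nra.
  - apply Rle_trans with (INR J * sqrt (INR T / (Vp + / INR T))); [|exact HJ].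
    apply Rmult_le_compat_l; [apply pos_INR|].
    apply sqrt_le_1_alt. apply Rmult_le_compat_l; [lra|]. apply Rinv_le_contravar; lra.
Qed.

Section StepA.
Variables (T : nat) (v m : nat -> R) (t : nat).
Hypotheses (HT : (1 <= T)%nat) (Ht : (1 <= t <= T)%nat) (Hrange : range_ok T v m)
  (HI : invA T v m t (stateA T v m t)).

Lemma invA_continue :
  let s := stateA T v m t in
  let Vc := next_Vcur s (m t) (m (t - 1)%nat) in
  INR (S (lenA s)) < sqrt (INR T / (VprevA s + Vc + / INR T)) ->
  invA T v m (S t) (mkA (prod_weights T s (v t) (m t)) (S (lenA s)) (VprevA s) Vc).
Proof.
  intros s Vc Hcont. fold s in HI.
  destruct (next_Vcur_spec T v m t s ltac:(lia) HI) as [HVc [Hvar Hdrift]].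
  fold Vc in HVc, Hvar, Hdrift.
  destruct (pA_distr T v m t HT (invA_w_pos HI)) as [[Hp0 Hp1] Hpos].
  destruct (Hrange t ltac:(lia)) as [Hvt Hmt].
  assert (Hw : forall j, prod_weights T s (v t) (m t) j = (1 - ellA T v m t j / 2) * probA T s j)
    by (intros; unfold prod_weights, ellA; field).
  pose proof (invA_len_le HI). pose proof (invA_Vcur_nonneg HI).
  split; cbn [lenA wA VprevA VcurA]; replace (S t - S (lenA s))%nat with (t - lenA s)%nat by lia;
    replace (S t - 1)%nat with t by lia; try (intros; lia); try lra.
  - intros i Hi. rewrite Hw. pose proof (ellA_bounds T v m t i Hvt (proj1 Hmt)).
    apply Rmult_lt_0_compat; [lra | apply Hpos, in_experts; auto].
  - apply (invA_Vprev_nonneg HI).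
  - exact Hdrift.
  - intros i Hi.
    replace (S (lenA s)) with (lenA s + 1)%nat by lia.
    rewrite !seq_app, !lsum_app. replace (t - lenA s + lenA s)%nat with t by lia.
    simpl seq. rewrite !lsum_cons. simpl lsum.
    unfold probA at 1. simpl wA.
    rewrite (lsum_ext (experts T) _ _ (fun j _ => Hw j)), Hw.
    pose proof (prod_update_regret (experts T) (probA T s) (ellA T v m t) i Hpos Hp1
      (fun j _ => ellA_bounds T v m t j Hvt (proj1 Hmt)) ltac:(apply in_experts; auto))
      as Hstep.
    assert (Hloss : lossA T v m t = lsum (experts T) (fun j => probA T s j * ellA T v m t j))
      by (apply lossA_eq_expect; exact Hp1).
    rewrite <- Hloss in Hstep.
    pose proof (invA_batch_regret HI i Hi). lra.
  - exact (invA_closed HI).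
Qed.

Lemma invA_reset :
  let s := stateA T v m t in
  let Vc := next_Vcur s (m t) (m (t - 1)%nat) in
  ~ INR (S (lenA s)) < sqrt (INR T / (VprevA s + Vc + / INR T)) ->
  invA T v m (S t) (mkA (fun _ => 1) 0 (VprevA s + Vc) 0).
Proof.
  intros s Vc Hstop. fold s in HI.
  destruct (next_Vcur_spec T v m t s ltac:(lia) HI) as [HVc [Hvar _]]. fold Vc in HVc, Hvar.
  assert (HTp : 0 < INR T) by (apply lt_0_INR; lia).
  pose proof (invA_Vprev_nonneg HI). pose proof (invA_Vcur_nonneg HI).
  split; cbn [lenA wA VprevA VcurA]; rewrite ?Nat.sub_0_r; try (intros; lia); try (intros; lra).
  - intros i _. rewrite probA_uniform, ln_Rinv by auto. simpl. lra.
  - destruct (invA_close_batch T v m t (VprevA s + Vc) HT ltac:(lia) Hrange HI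
      ltac:(fold s; lra)) as [J [Hloss HJ]].
    exists (S J). fold s in HJ.
    destruct (Hrange t ltac:(lia)) as [Hvt Hmt].
    destruct (pA_distr T v m t HT (invA_w_pos HI)) as [Hdistr _].
    pose proof (lossA_bounds T v m t Hdistr Hvt (proj1 Hmt)).
    replace (S t - 1)%nat with t by lia.
    replace (seq 1 t) with (seq 1 (t - 1) ++ t :: nil)
      by (replace t with (1 + (t - 1))%nat at 2 3 by lia; rewrite <- seq_S; f_equal; lia).
    rewrite lsum_app, lsum_cons. simpl lsum.
    assert (Ht1 : INR (t - 1) <= INR t) by (apply le_INR; lia).
    apply Rnot_lt_le in Hstop.
    pose proof (invA_len_le HI).
    assert (INR (t - lenA s - 1) + INR (S (lenA s)) = INR t)
      by (rewrite <- plus_INR; f_equal; lia).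
    assert (2 * INR (t - 1) / INR T <= 2 * INR t / INR T)
      by (apply Rmult_le_compat_r; [left; apply Rinv_0_lt_compat|]; lra).
    split; [|rewrite S_INR]; lra.
Qed.

Lemma invA_step : invA T v m (S t) (stateA T v m (S t)).
Proof.
  rewrite stateA_S, stepA_unfold by lia.
  destruct Rlt_dec as [Hcont|Hstop]; [apply invA_continue | apply invA_reset]; auto.
Qed.

End StepA.

Lemma invA_all T v m : (1 <= T)%nat -> range_ok T v m ->
  forall t, (1 <= t <= S T)%nat -> invA T v m t (stateA T v m t).
Proof.
  intros HT Hr t. induction t as [|t IH]; intros Ht; [lia|].
  destruct (Nat.eq_dec t 0) as [->|Hne]; [apply invA_init; auto|].
  apply invA_step; auto; [lia | apply IH; lia].
Qed.

Lemma regretA_total T v m : (1 <= T)%nat -> range_ok T v m ->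
  exists J : nat,
    lsum (seq 1 T) (lossA T v m) <=
      (INR J + 1) * (2 * ln (INR T) + 1) + 8 * sqrt (INR T) * sqrt (VT T m + / INR T) + 2
    /\ INR J * sqrt (INR T / (VT T m + / INR T)) <= INR T.
Proof.
  intros HT Hr.
  pose proof (invA_all T v m HT Hr (S T) ltac:(lia)) as HI.
  destruct (invA_close_batch T v m (S T) (VT T m) HT ltac:(lia) Hr HI) as [J [Hloss HJ]].
  { rewrite <- var_before_VT. apply (invA_var_le HI). }
  exists J. rewrite Nat.sub_1_r in Hloss. simpl pred in Hloss. rewrite S_INR in Hloss.
  assert (HTp : 0 < INR T) by (apply lt_0_INR; lia).
  split.
  - replace (2 * INR T / INR T) with 2 in Hloss by (field; lra). lra.
  - eapply Rle_trans; [exact HJ|]. apply le_INR. lia.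
Qed.

(** * Tuning and the main theorem *)

Lemma VT_le_LT T m : (forall t, (1 <= t <= T)%nat -> 0 <= m t <= 1) -> VT T m <= LT T m.
Proof.
  intros Hm. apply lsum_le. intros t Ht. apply in_seq in Ht.
  destruct (Req_EM_T (m t) (m (t - 1)%nat)) as [Heq|Hne].
  - rewrite Heq, Rminus_diag, Rabs_R0. lra.
  - destruct (Hm t ltac:(lia)). destruct (Hm (t - 1)%nat ltac:(lia)). apply Rabs_le. lra.
Qed.

Lemma LT_0_or_ge1 T m : LT T m = 0 \/ 1 <= LT T m.
Proof. apply lsum_0_or_ge1. intros x _. destruct Req_EM_T; auto. Qed.

Lemma one_le_ln_INR T : (3 <= T)%nat -> 1 <= ln (INR T).
Proof.
  intros HT. rewrite <- (ln_exp 1). apply ln_le; [apply exp_pos|].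
  pose proof exp_le_3. apply Rle_trans with (INR 3); [simpl; lra | apply le_INR; auto].
Qed.

Lemma round_ok_all T NB etaB v m : (1 <= T)%nat -> (1 <= NB)%nat -> range_ok T v m ->
  forall u, (1 <= u < 1 + T)%nat -> round_ok T NB etaB v m u.
Proof.
  intros HT HN Hr u Hu. destruct (Hr u ltac:(lia)) as [Hv Hm].
  split; [|split; [apply pB_distr; auto | split; lra]].
  apply (pA_distr T v m u HT), (invA_w_pos (invA_all T v m HT Hr u ltac:(lia))).
Qed.

Lemma DR_eq T NB etaB v m :
  DR T NB etaB v m
  = lsum (seq 1 T) (fun t => mu (v t) (m t)) - expRewFrom T NB etaB v m T 1 (etaP T).
Proof. reflexivity. Qed.

Lemma DR_le_regretB T NB etaB v m : (1 <= T)%nat -> (1 <= NB)%nat -> 0 < etaB ->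
  0 < etaP T <= / 2 -> range_ok T v m ->
  DR T NB etaB v m <= LT T m + 3 + INR T * (/ INR NB + INR NB / etaB).
Proof.
  intros HT HN HetaB Heta Hr. set (e := etaP T) in *.
  pose proof (expRewFrom_ge_B T NB etaB v m Heta T 1 e ltac:(lra)
    (round_ok_all T NB etaB v m HT HN Hr)) as Hpot.
  fold e in Hpot. replace (e + (1 - e)) with 1 in Hpot by ring. rewrite ln_1 in Hpot.
  pose proof (regretB_total T NB etaB v m HT HN HetaB Hr) as HB. rewrite lsum_minus in HB.
  assert (Hln : -2 * e <= ln (1 - e)).
  { pose proof (ln_ge_1_sub_inv (1 - e) ltac:(lra)).
    enough (-2 * e <= 1 - / (1 - e)) by lra.
    replace (1 - / (1 - e)) with (- e / (1 - e)) by (field; lra).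
    apply (Rle_div_r (-2 * e) (- e) (1 - e)); [lra | nra]. }
  assert (Hcost : -2 <= / e * ln (1 - e)).
  { replace (-2) with (/ e * (-2 * e)) by (field; lra).
    apply Rmult_le_compat_l; [left; apply Rinv_0_lt_compat|]; lra. }
  rewrite DR_eq. fold e. lra.
Qed.

Lemma DR_le_regretA T NB etaB v m : (1 <= T)%nat -> (1 <= NB)%nat ->
  0 < etaP T <= / 2 -> range_ok T v m ->
  DR T NB etaB v m <= lsum (seq 1 T) (lossA T v m) - / etaP T * ln (etaP T) + 2 * etaP T * INR T.
Proof.
  intros HT HN Heta Hr. set (e := etaP T) in *.
  pose proof (expRewFrom_ge_A T NB etaB v m Heta T 1 e ltac:(lra)
    (round_ok_all T NB etaB v m HT HN Hr)) as Hpot.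
  fold e in Hpot. replace (e / (e + (1 - e))) with e in Hpot by (field; lra).
  rewrite DR_eq. unfold lossA. rewrite lsum_minus. fold e. lra.
Qed.

Lemma regretB_tuning T : INR T * (/ INR (S T) + INR (S T) / (INR T + 1) ^ 3) <= 2.
Proof.
  pose proof (pos_INR T). rewrite S_INR.
  replace (INR T * (/ (INR T + 1) + (INR T + 1) / (INR T + 1) ^ 3))
    with (INR T / (INR T + 1) + INR T / ((INR T + 1) * (INR T + 1))) by (field; lra).
  assert (INR T / (INR T + 1) <= 1) by (apply (Rdiv_le_1 (INR T) (INR T + 1)); lra).
  assert (INR T / ((INR T + 1) * (INR T + 1)) <= 1)
    by (apply (Rdiv_le_1 (INR T) ((INR T + 1) * (INR T + 1))); nra).
  lra.
Qed.

Section Tuning.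
Variable T : nat.
Hypothesis HT : (4 <= T)%nat.

Let HTpos : 0 < INR T.
Proof. apply lt_0_INR. lia. Qed.

Let HlnT : 1 <= ln (INR T).
Proof. apply one_le_ln_INR. lia. Qed.

Let HlnT_le : ln (INR T) <= INR T.
Proof. pose proof (ln_le_sub1 (INR T) HTpos). lra. Qed.

Let q := sqrt (ln (INR T) / INR T).

Let Hq2 : q * q = ln (INR T) / INR T.
Proof. apply sqrt_sqrt. apply Rdiv_le_0_compat; lra. Qed.

Let Hqpos : 0 < q.
Proof. apply sqrt_lt_R0, Rdiv_lt_0_compat; lra. Qed.

Let Heq : etaP T = q / 2.
Proof. unfold etaP, q. field. Qed.

Lemma etaP_bounds : 0 < etaP T <= / 2.
Proof.
  assert (q <= 1).
  { apply Rsqr_incr_0_var; [|lra]. unfold Rsqr. rewrite Hq2, Rmult_1_r.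
    apply (Rdiv_le_1 (ln (INR T)) (INR T)); lra. }
  rewrite Heq. lra.
Qed.

Lemma etaP_cost :
  - / etaP T * ln (etaP T) + 2 * etaP T * INR T <= 3 * sqrt (INR T * ln (INR T)).
Proof.
  set (Q := sqrt (INR T * ln (INR T))).
  assert (HQ2 : Q * Q = INR T * ln (INR T)) by (apply sqrt_sqrt; nra).
  assert (HQ : 0 <= Q) by apply sqrt_pos.
  assert (HqQ : q * Q = ln (INR T)).
  { apply Rsqr_inj; [nra | lra |]. unfold Rsqr.
    replace (q * Q * (q * Q)) with (q * q * (Q * Q)) by ring. rewrite Hq2, HQ2. field. lra. }
  assert (HqT : q * INR T = Q).
  { apply Rsqr_inj; [nra | lra |]. unfold Rsqr.
    replace (q * INR T * (q * INR T)) with (q * q * (INR T * INR T)) by ring.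
    rewrite Hq2, HQ2. field. lra. }
  assert (Hinv : / etaP T = 2 / q) by (rewrite Heq; field; lra).
  assert (Hinv_le : / etaP T <= INR T).
  { rewrite Hinv. apply Rle_div_l; [lra|].
    apply Rsqr_incr_0_var; [|nra]. unfold Rsqr.
    replace (INR T * q * (INR T * q)) with (INR T * (INR T * (q * q))) by ring.
    rewrite Hq2. replace (INR T * (INR T * (ln (INR T) / INR T))) with (INR T * ln (INR T))
      by (field; lra).
    assert (4 <= INR T) by (apply (le_INR 4) in HT; simpl in HT; lra). nra. }
  pose proof etaP_bounds.
  assert (Hln : ln (/ etaP T) <= ln (INR T))
    by (apply ln_le; [apply Rinv_0_lt_compat; lra | exact Hinv_le]).
  rewrite <- (Rinv_inv (etaP T)) at 2. rewrite ln_Rinv by (apply Rinv_0_lt_compat; lra).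
  assert (/ etaP T * ln (/ etaP T) <= / etaP T * ln (INR T))
    by (apply Rmult_le_compat_l; [left; apply Rinv_0_lt_compat|]; lra).
  assert (/ etaP T * ln (INR T) = 2 * Q) by (rewrite Hinv, <- HqQ; field; lra).
  assert (2 * etaP T * INR T = Q) by (rewrite Heq, <- HqT; field).
  lra.
Qed.

End Tuning.

(* The number of completed batches is at most [T / sqrt (T / (V + 1/T)) = sqrt (T V + 1)]. *)
Lemma regretA_le T v m : (1 <= T)%nat -> range_ok T v m ->
  1 <= ln (INR T) -> 1 <= INR T * VT T m ->
  lsum (seq 1 T) (lossA T v m) <= 27 * ln (INR T) * sqrt (INR T * VT T m).
Proof.
  intros HT Hr HlnT HTV.
  destruct (regretA_total T v m HT Hr) as [J [Hloss HJ]].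
  set (V := VT T m) in *. set (Sq := sqrt (INR T * V)).
  assert (HTp : 0 < INR T) by (apply lt_0_INR; lia).
  assert (HiT : 0 < / INR T) by (apply Rinv_0_lt_compat; lra).
  assert (HV : 0 < V) by nra.
  assert (HS2 : Sq * Sq = INR T * V) by (apply sqrt_sqrt; lra).
  assert (HS0 : 0 <= Sq) by apply sqrt_pos.
  assert (HS1 : 1 <= Sq) by nra.
  set (A := sqrt (INR T) * sqrt (V + / INR T)) in *.
  assert (HA0 : 0 <= A) by (apply Rmult_le_pos; apply sqrt_pos).
  assert (HA2 : A * A = INR T * V + 1).
  { unfold A. replace (sqrt (INR T) * sqrt (V + / INR T) * (sqrt (INR T) * sqrt (V + / INR T)))
      with ((sqrt (INR T) * sqrt (INR T)) * (sqrt (V + / INR T) * sqrt (V + / INR T))) by ring.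
    rewrite !sqrt_sqrt by lra. field. lra. }
  assert (HAS : A <= 2 * Sq) by (apply Rsqr_incr_0_var; unfold Rsqr; nra).
  assert (HBA : sqrt (INR T / (V + / INR T)) * A = INR T).
  { assert (0 < sqrt (V + / INR T)) by (apply sqrt_lt_R0; lra).
    unfold A. rewrite sqrt_div by lra.
    replace (sqrt (INR T) / sqrt (V + / INR T) * (sqrt (INR T) * sqrt (V + / INR T)))
      with (sqrt (INR T) * sqrt (INR T)) by (field; lra).
    apply sqrt_sqrt; lra. }
  assert (HJA : INR J <= A).
  { apply Rmult_le_reg_l with (sqrt (INR T / (V + / INR T))).
    - apply sqrt_lt_R0, Rdiv_lt_0_compat; lra.
    - rewrite HBA. lra. }
  assert (Sq <= Sq * ln (INR T)) by nra.
  assert (ln (INR T) <= Sq * ln (INR T)) by nra.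
  assert (8 * sqrt (INR T) * sqrt (V + / INR T) = 8 * A) by (unfold A; ring).
  nra.
Qed.

Section Final.
Variables (c : R) (T : nat) (v m : nat -> R).
Hypotheses (Hc : 0 < c) (HT : (4 <= T)%nat) (HTc : / c < INR T) (Hr : range_ok T v m)
  (HV : c * ln (INR T) <= VT T m).

Let HlnT : 1 <= ln (INR T).
Proof. apply one_le_ln_INR. lia. Qed.

Let HV_LT : VT T m <= LT T m.
Proof. apply VT_le_LT. intros t Ht. apply Hr, Ht. Qed.

Let HTV : 1 <= INR T * VT T m.
Proof.
  assert (c <= VT T m) by nra.
  apply Rmult_lt_compat_r with (r := c) in HTc; [|exact Hc].
  rewrite Rinv_l in HTc by lra. nra.
Qed.

Lemma DR_le_LT : DR T (S T) ((INR T + 1) ^ 3) v m <= (30 + 3 / c) * ln (INR T) * LT T m.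
Proof.
  pose proof (DR_le_regretB T (S T) ((INR T + 1) ^ 3) v m ltac:(lia) ltac:(lia)
    ltac:(apply pow_lt; pose proof (pos_INR T); lra) (etaP_bounds T HT) Hr).
  pose proof (regretB_tuning T).
  assert (HL1 : 1 <= LT T m).
  { destruct (LT_0_or_ge1 T m) as [HL0|HL1]; [|exact HL1]. exfalso. nra. }
  assert (0 <= 3 / c) by (apply Rdiv_le_0_compat; lra).
  assert (0 <= 3 / c * ln (INR T) * LT T m) by (apply Rmult_le_pos; [apply Rmult_le_pos|]; lra).
  nra.
Qed.

Lemma DR_le_sqrt :
  DR T (S T) ((INR T + 1) ^ 3) v m <= (30 + 3 / c) * ln (INR T) * sqrt (INR T * VT T m).
Proof.
  pose proof (DR_le_regretA T (S T) ((INR T + 1) ^ 3) v m ltac:(lia) ltac:(lia)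
    (etaP_bounds T HT) Hr).
  pose proof (etaP_cost T HT).
  pose proof (regretA_le T v m ltac:(lia) Hr HlnT HTV).
  set (Sq := sqrt (INR T * VT T m)) in *.
  assert (HS : 1 <= Sq) by (rewrite <- sqrt_1; apply sqrt_le_1_alt; lra).
  assert (Hic : 0 < / c) by (apply Rinv_0_lt_compat; lra).
  assert (HQ : sqrt (INR T * ln (INR T)) <= (1 + / c) * Sq).
  { assert (HQ2 : sqrt (INR T * ln (INR T)) * sqrt (INR T * ln (INR T)) = INR T * ln (INR T))
      by (apply sqrt_sqrt; nra).
    assert (HS2 : Sq * Sq = INR T * VT T m) by (apply sqrt_sqrt; lra).
    assert (ln (INR T) <= / c * VT T m).
    { apply Rmult_le_reg_l with c; [lra|]. rewrite <- Rmult_assoc, Rinv_r; lra. }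
    assert (INR T * ln (INR T) <= / c * (INR T * VT T m)).
    { replace (/ c * (INR T * VT T m)) with (INR T * (/ c * VT T m)) by ring.
      apply Rmult_le_compat_l; lra. }
    assert (/ c * (INR T * VT T m) <= (1 + / c) * (1 + / c) * (INR T * VT T m))
      by (apply Rmult_le_compat_r; nra).
    apply Rsqr_incr_0_var; [unfold Rsqr | nra]. nra. }
  assert ((1 + / c) * Sq * 1 <= (1 + / c) * Sq * ln (INR T))
    by (apply Rmult_le_compat_l; [apply Rmult_le_pos|]; lra).
  unfold Rdiv. lra.
Qed.

End Final.

Theorem theorem3 :
  exists (NB : nat -> nat) (etaB : nat -> R),
    (forall T : nat, (1 <= NB T)%nat) /\ (forall T : nat, 0 < etaB T) /\
    forall c : R, 0 < c ->
    exists (C : R) (k : nat) (T0 : nat), 0 < C /\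
      forall T : nat, (T0 <= T)%nat ->
      forall v m : nat -> R,
        (forall t : nat, (1 <= t <= T)%nat -> 0 <= v t <= 1 /\ 0 <= m t <= 1) ->
        c * ln (INR T) <= VT T m ->
        DR T (NB T) (etaB T) v m
          <= C * ln (INR T) ^ k * Rmin (sqrt (INR T * VT T m)) (LT T m).
Proof.
  exists (fun T => S T), (fun T => (INR T + 1) ^ 3).
  split; [intros; lia|]. split; [intros T; apply pow_lt; pose proof (pos_INR T); lra|].
  intros c Hc.
  destruct (INR_unbounded (/ c)) as [N HN].
  exists (30 + 3 / c), 1%nat, (Nat.max 4 N). split.
  { assert (0 <= 3 / c) by (apply Rdiv_le_0_compat; lra). lra. }
  intros T HT v m Hr HV.
  assert (HTc : / c < INR T) by (apply Rlt_le_trans with (INR N); [exact HN | apply le_INR; lia]).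
  rewrite pow_1. unfold Rmin. destruct Rle_dec.
  - apply (DR_le_sqrt c T v m); auto; lia.
  - apply (DR_le_LT c T v m); auto; lia.
Qed.
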